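(* Let $K$ be an algebraically closed field complete with respect to a nontrivial non-Archimedean valuation $\nu:K\to\mathbb{T}=\mathbb{R}\cup\{-\infty\}$, and let $X$ be a closed algebraic subset of $\mathbb{A}^n=K^n$. Let $\mathcal{G}$ be the set of all linear embeddings of $X$, and let \[\pi=\varprojlim_{i\in\mathcal{G}}\pi_i : X^{an}\longrightarrow \varprojlim_{i\in\mathcal{G}} \mathrm{Trop}_i(X).\] Then (i) $\pi$ is surjective, and (ii) the restriction of $\pi$ to $X^{cl}$ is injective.
   Context: Conventions: $\nu(0)=-\infty$; $\mathbb{T}$ carries the topology extending that of $\mathbb{R}$ in which the neighbourhoods of $-\infty$ are the semi-infinite open intervals; $\nu:\mathbb{A}^N\to\mathbb{T}^N$ also denotes coordinatewise valuation. $z_1,\dots,z_n$ are the coordinates on $\mathbb{A}^n$ and $K[X]$ is the coordinate ring of $X$. $X^{an}$ (the Berkovich analytification) is the set of multiplicative seminorms $[\ ]_x$ on $K[X]$ compatible with $\nu$, i.e. $[a]_x=\exp(\nu(a))$ for $a\in K$, with the weakest topology making all maps $x\mapsto[f]_x$ continuous. $X^{cl}\subset X^{an}$ is the set of seminorms $[f]_x=\exp(\nu(f(x)))$ coming from closed points $x\in X$. A morphism $i:X\to\mathbb{A}^N$, $i(x)=(f_1(x),\dots,f_N(x))$, is linear if each $f_j$ is a $K$-linear combination of $z_1,\dots,z_n$ and $1$; a linear embedding is a linear morphism that is an isomorphism onto its image. For such $i$, $\mathrm{Trop}_i(X)=\nu(i(X))\subset\mathbb{T}^N$ is the linear tropicalization,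 and $\pi_i:X^{an}\to\mathbb{T}^N$ is $x\mapsto(\log[f_1]_x,\dots,\log[f_N]_x)$. $\mathcal{G}$ is partially ordered by: $i:X\to\mathbb{A}^N$ dominates $j:X\to\mathbb{A}^M$ if there is a morphism $\varphi:\mathbb{A}^N\to\mathbb{A}^M$ restricting to a homomorphism of tori $(K^* )^N\to(K^* )^M$, which is a composition of a linear embedding and a coordinate projection, with $\varphi\circ i=j$; such $\varphi$ induces a map $\mathrm{Trop}_i(X)\to\mathrm{Trop}_j(X)$, and the inverse limit is taken in topological spaces over this directed system. *)

From mathcomp Require Import all_boot all_order all_algebra.
From mathcomp Require Import mpoly.
From mathcomp Require Import all_classical all_reals all_analysis.
Set Implicit Arguments. Unset Strict Implicit. Unset Printing Implicit Defensive.
Import Order.TTheory GRing.Theory Num.Theory.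
Local Open Scope ring_scope.
Local Open Scope classical_set_scope.

(* T = R ∪ {-oo} is represented inside \bar R (values +oo are excluded by the
   valuation axioms below). *)

Definition expT (R : realType) (t : \bar R) : R :=
  match t with EFin r => expR r | -oo%E => 0 | +oo%E => 0 end.

Definition logT (R : realType) (r : R) : \bar R :=
  if r == 0 then -oo%E else (ln r)%:E.

(** nu : K -> T is a non-Archimedean valuation in the (log-absolute value)
    convention of the paper: [a] = exp(nu a), nu 0 = -oo. *)
Definition is_nA_valuation (R : realType) (K : fieldType) (nu : K -> \bar R) :=
  [/\ forall a, nu a = -oo%E <-> a = 0,
      forall a, nu a != +oo%E,
      forall a b : K, nu (a * b)%R = (nu a + nu b)%E &
      forall a b : K, (nu (a + b)%R <= Order.max (nu a) (nu b))%E].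

Definition nontrivial_valuation (R : realType) (K : fieldType) (nu : K -> \bar R) :=
  exists a : K, nu a != 0%E /\ nu a != -oo%E.

(** Completeness: every Cauchy sequence (for the metric exp(nu(a-b)))
    converges. *)
Definition complete_valuation (R : realType) (K : fieldType) (nu : K -> \bar R) :=
  forall u : nat -> K,
    (forall M : R, exists N : nat, forall m k, (N <= m)%N -> (N <= k)%N ->
        (nu (u m - u k)%R < M%:E)%E) ->
    exists l : K, forall M : R, exists N : nat, forall m, (N <= m)%N ->
        (nu (u m - l)%R < M%:E)%E.

Definition closed_algebraic (K : fieldType) (n : nat) (X : set ('I_n -> K)) :=
  exists S : set (mpoly.mpoly n K),
    X = [set p | forall f, S f -> mpoly.meval p f = 0].

Definition coordz (K : fieldType) (n : nat) (k : 'I_n) : mpoly.mpoly n K :=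
  mpoly.mpolyX K (mpoly.mnm1 k).

Definition linpoly (K : fieldType) (n N : nat) (A : 'I_N -> 'I_n -> K)
  (b : 'I_N -> K) (j : 'I_N) : mpoly.mpoly n K :=
  \sum_(k < n) mpoly.mpolyC n (A j k) * coordz K k + mpoly.mpolyC n (b j).

Definition linmap (K : fieldType) (n N : nat) (A : 'I_N -> 'I_n -> K)
  (b : 'I_N -> K) (p : 'I_n -> K) : 'I_N -> K :=
  fun j => \sum_(k < n) A j k * p k + b j.

(** i is a linear embedding of X: it is an isomorphism onto its (closed)
    image, i.e. the pull-back K[y_1..y_N] -> K[X] is surjective: every
    coordinate z_k restricted to X is a polynomial in f_1,...,f_N. *)
Definition lin_embedding (K : fieldType) (n : nat) (X : set ('I_n -> K))
  (N : nat) (A : 'I_N -> 'I_n -> K) (b : 'I_N -> K) :=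
  forall k : 'I_n, exists g : mpoly.mpoly N K,
    forall p, X p -> mpoly.meval (linmap A b p) g = p k.

(** A morphism phi : A^N -> A^M which is a composition of a linear
    embedding and a coordinate projection is exactly an affine map
    phi(y)_l = sum_k C l k y_k + d l; it restricts to a homomorphism of
    tori (K^x)^N -> (K^x)^M. *)
Definition torus_hom (K : fieldType) (N M : nat) (C : 'I_M -> 'I_N -> K)
  (d : 'I_M -> K) :=
  forall y y' : 'I_N -> K, (forall k, y k != 0) -> (forall k, y' k != 0) ->
    (forall l, linmap C d y l != 0) /\
    linmap C d (fun k => y k * y' k) = (fun l => linmap C d y l * linmap C d y' l).

(** X^an: multiplicative seminorms on K[X] compatible with nu.  A seminorm on
    K[X] = K[z]/I(X) is represented as a seminorm on K[z] vanishing on I(X). *)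
Definition berkovich_point (R : realType) (K : fieldType) (nu : K -> \bar R)
  (n : nat) (X : set ('I_n -> K)) (x : mpoly.mpoly n K -> R) :=
  [/\ forall a : K, x (mpoly.mpolyC n a) = expT (nu a),
      forall f, 0 <= x f,
      forall f g, x (f * g) = x f * x g,
      forall f g, x (f + g) <= x f + x g &
      forall f, (forall p, X p -> mpoly.meval p f = 0) -> x f = 0].

Definition classical_point (R : realType) (K : fieldType) (nu : K -> \bar R)
  (n : nat) (p : 'I_n -> K) : mpoly.mpoly n K -> R :=
  fun f => expT (nu (mpoly.meval p f)).

Definition pi_lin (R : realType) (K : fieldType) (n N : nat)
  (A : 'I_N -> 'I_n -> K) (b : 'I_N -> K) (x : mpoly.mpoly n K -> R) :
  'I_N -> \bar R := fun j => logT (x (linpoly A b j)).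

Definition nuvec (R : realType) (K : fieldType) (nu : K -> \bar R) (N : nat)
  (y : 'I_N -> K) : 'I_N -> \bar R := fun j => nu (y j).

Definition trop_lin (R : realType) (K : fieldType) (nu : K -> \bar R) (n : nat)
  (X : set ('I_n -> K)) (N : nat) (A : 'I_N -> 'I_n -> K) (b : 'I_N -> K) :
  set ('I_N -> \bar R) := [set nuvec nu (linmap A b p) | p in X].

(** A family indexed by linear data; only its values at linear embeddings
    matter. *)
Definition trop_family (R : realType) (K : fieldType) (n : nat) :=
  forall N : nat, ('I_N -> 'I_n -> K) -> ('I_N -> K) -> ('I_N -> \bar R).

(** Elements of the inverse limit of Trop_i(X) over the directed set G of
    linear embeddings: t_i in Trop_i(X) for every i in G, and whenever i
    dominates j via phi, t_j is the image of t_i under the map induced by phi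
    (the map nu(y) |-> nu(phi(y)), well defined since phi is a torus
    homomorphism). *)
Definition in_inverse_limit (R : realType) (K : fieldType) (nu : K -> \bar R)
  (n : nat) (X : set ('I_n -> K)) (t : trop_family R K n) :=
  (forall N A b, lin_embedding X A b -> trop_lin nu X A b (t N A b)) /\
  (forall N M (A : 'I_N -> 'I_n -> K) b (A' : 'I_M -> 'I_n -> K) b'
          (C : 'I_M -> 'I_N -> K) d,
     lin_embedding X A b -> lin_embedding X A' b' -> torus_hom C d ->
     (forall p, X p -> linmap C d (linmap A b p) = linmap A' b' p) ->
     exists y : 'I_N -> K,
       nuvec nu y = t N A b /\ nuvec nu (linmap C d y) = t M A' b').

(* Given a compatible family t in the inverse limit, the fibres
   B_i = {p in X | nu(i(p)) = t_i} are nonempty, and B_i and B_j both contain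
   the fibre of the concatenated embedding (i, j), which dominates i and j
   through coordinate projections.  So the fibres form a filter base; let U be
   an ultrafilter refining it.  On the fibre of the identity embedding the
   coordinates, hence all polynomials, have bounded valuation, so
   x(f) := lim_U exp(nu(f(p))) exists by compactness of a segment.  Limits
   preserve multiplicativity and the triangle inequality, and exp(nu(f_j(p)))
   is constant on B_i, so x is a point of X^an with pi_i(x) = t_i.
   Injectivity on X^cl: the translation z |-> z - p is a linear embedding,
   and it sends p, and only p, to a vector with all valuations -oo. *)

From mathcomp Require Import all_boot all_order all_algebra.
From mathcomp Require Import mpoly.
From mathcomp Require Import all_classical all_reals all_analysis.
Set Implicit Arguments. Unset Strict Implicit. Unset Printing Implicit Defensive.
Import Order.TTheory GRing.Theory Num.Theory numFieldNormedType.Exports.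
Local Open Scope ring_scope.
Local Open Scope classical_set_scope.

Section ExpT.
Context (R : realType).
Implicit Types a b : \bar R.

Lemma expT_ge0 a : 0 <= expT a.
Proof. by case: a => [r| |] //=; rewrite ltW // expR_gt0. Qed.

Lemma expTD a b : a != +oo%E -> b != +oo%E ->
  expT (a + b)%E = expT a * expT b.
Proof.
by case: a => [r| |] //; case: b => [s| |] //= _ _; rewrite ?mulr0 ?mul0r ?expRD.
Qed.

Lemma le_expT a b : b != +oo%E -> (a <= b)%E -> expT a <= expT b.
Proof. by case: a => [r| |]; case: b => [s| |] //= _; rewrite ?lee_fin ?ler_expR. Qed.

Lemma expTK a : a != +oo%E -> logT (expT a) = a.
Proof.
case: a => [r| |] //= _; rewrite /logT ?eqxx //.
by rewrite gt_eqF ?expR_gt0 // expRK.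
Qed.

Lemma le_fine a : a != +oo%E -> (a <= (fine a)%:E)%E.
Proof. by case: a => [r| |] //= _; rewrite leNye. Qed.

End ExpT.

Section Valuation.
Context (R : realType) (K : fieldType) (nu : K -> \bar R).
Hypothesis nuV : is_nA_valuation nu.

Lemma nu0 : nu 0 = -oo%E.
Proof. by case: nuV => h _ _ _; apply: (proj2 (h 0)). Qed.

Lemma nu_eq_ninfty a : nu a = -oo%E -> a = 0.
Proof. by case: nuV => h _ _ _; apply: (proj1 (h a)). Qed.

Lemma nu_neq_pinfty a : nu a != +oo%E.
Proof. by case: nuV. Qed.

Lemma nuM a b : nu (a * b) = (nu a + nu b)%E.
Proof. by case: nuV. Qed.

Lemma nuD_le a b (r : \bar R) :
  (nu a <= r)%E -> (nu b <= r)%E -> (nu (a + b) <= r)%E.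
Proof.
case: nuV => _ _ _ /(_ a b) nuD nua nub.
by apply: le_trans nuD _; rewrite ge_max nua nub.
Qed.

Lemma expT_nuD a b : expT (nu (a + b)) <= expT (nu a) + expT (nu b).
Proof.
have [|] := leP (nu a) (nu b) => [ab | /ltW ba].
  apply: le_trans (le_expT (nu_neq_pinfty b) (nuD_le ab (lexx _))) _.
  by rewrite lerDr expT_ge0.
apply: le_trans (le_expT (nu_neq_pinfty a) (nuD_le (lexx _) ba)) _.
by rewrite lerDl expT_ge0.
Qed.

End Valuation.

Definition coordproj {K : fieldType} {N M : nat} (f : 'I_M -> 'I_N) :
  'I_M -> 'I_N -> K := fun l k => (k == f l)%:R.

Definition catf (T : Type) N1 N2 (u1 : 'I_N1 -> T) (u2 : 'I_N2 -> T) :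
  'I_(N1 + N2) -> T :=
  fun j => match fintype.split j with inl j1 => u1 j1 | inr j2 => u2 j2 end.

Lemma catf_lshift (T : Type) N1 N2 (u1 : 'I_N1 -> T) (u2 : 'I_N2 -> T) j :
  catf u1 u2 (lshift N2 j) = u1 j.
Proof. by rewrite /catf (unsplitK (inl _ j)). Qed.

Lemma catf_rshift (T : Type) N1 N2 (u1 : 'I_N1 -> T) (u2 : 'I_N2 -> T) j :
  catf u1 u2 (rshift N1 j) = u2 j.
Proof. by rewrite /catf (unsplitK (inr _ j)). Qed.

Section LinearData.
Context (K : fieldType).

Lemma linmap_coordprojD N M (f : 'I_M -> 'I_N) b y l :
  linmap (coordproj f : 'I_M -> 'I_N -> K) b y l = y (f l) + b l.
Proof.
rewrite /linmap /coordproj (bigD1 (f l)) //= eqxx mul1r big1 ?addr0 //.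
by move=> k /negbTE ->; rewrite mul0r.
Qed.

Lemma linmap_coordproj N M (f : 'I_M -> 'I_N) y l :
  linmap (coordproj f : 'I_M -> 'I_N -> K) (fun => 0) y l = y (f l).
Proof. by rewrite linmap_coordprojD addr0. Qed.

Lemma torus_hom_coordproj N M (f : 'I_M -> 'I_N) :
  torus_hom (coordproj f : 'I_M -> 'I_N -> K) (fun => 0).
Proof.
move=> y y' y_neq0 _; split=> [l|]; first by rewrite linmap_coordproj y_neq0.
by apply/funext => l; rewrite !linmap_coordproj.
Qed.

Lemma meval_linpoly n N (A : 'I_N -> 'I_n -> K) b p j :
  meval p (linpoly A b j) = linmap A b p j.
Proof.
rewrite /linpoly /linmap mevalD mevalC raddf_sum /=; congr (_ + _).
by apply: eq_bigr => k _; rewrite mevalM mevalC mevalXU.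
Qed.

Lemma lin_embedding_translation n (X : set ('I_n -> K)) (b : 'I_n -> K) :
  lin_embedding X (coordproj id) b.
Proof.
move=> k; exists (mpolyC n (- b k) + coordz K k) => p _.
by rewrite mevalD mevalC mevalXU linmap_coordprojD addrC addrK.
Qed.

Section Concatenation.
Context (n N1 N2 : nat) (A1 : 'I_N1 -> 'I_n -> K) (b1 : 'I_N1 -> K)
  (A2 : 'I_N2 -> 'I_n -> K) (b2 : 'I_N2 -> K).

Lemma linmap_catf_lshift p j :
  linmap (catf A1 A2) (catf b1 b2) p (lshift N2 j) = linmap A1 b1 p j.
Proof. by rewrite /linmap !catf_lshift. Qed.

Lemma linmap_catf_rshift p j :
  linmap (catf A1 A2) (catf b1 b2) p (rshift N1 j) = linmap A2 b2 p j.
Proof. by rewrite /linmap !catf_rshift. Qed.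

Lemma lin_embedding_catf (X : set ('I_n -> K)) :
  lin_embedding X A1 b1 -> lin_embedding X (catf A1 A2) (catf b1 b2).
Proof.
move=> emb1 k; have [g gE] := emb1 k.
exists (comp_mpoly (mktuple (fun i => coordz K (lshift N2 i))) g) => p Xp.
rewrite comp_mpoly_meval -(gE p Xp); apply: meval_eq => i.
by rewrite tnth_mktuple mevalXU linmap_catf_lshift.
Qed.

End Concatenation.

End LinearData.

Lemma pi_lin_classical (R : realType) (K : fieldType) (nu : K -> \bar R)
    (n N : nat) (A : 'I_N -> 'I_n -> K) b p :
  is_nA_valuation nu -> pi_lin A b (classical_point nu p) = nuvec nu (linmap A b p).
Proof.
move=> nuV; apply/funext => j.
by rewrite /pi_lin /classical_point meval_linpoly expTK // nu_neq_pinfty.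
Qed.

Lemma pi_lin_classical_inj (R : realType) (K : fieldType) (nu : K -> \bar R)
    (n : nat) (X : set ('I_n -> K)) (p q : 'I_n -> K) :
  is_nA_valuation nu ->
  (forall N (A : 'I_N -> 'I_n -> K) b, lin_embedding X A b ->
     pi_lin A b (classical_point nu p) = pi_lin A b (classical_point nu q)) ->
  p = q.
Proof.
move=> nuV pi_pq; apply/funext => k.
have := pi_pq n _ _ (lin_embedding_translation X (fun k => - p k)).
rewrite !pi_lin_classical // => /(congr1 (fun v => v k)).
rewrite /nuvec !linmap_coordprojD subrr nu0 // => /esym/(nu_eq_ninfty nuV)/eqP.
by rewrite subr_eq0 => /eqP.
Qed.

Section BoundedValuation.
Context (R : realType) (K : fieldType) (nu : K -> \bar R).
Hypothesis nuV : is_nA_valuation nu.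
Context (T : Type) (S : set T).

Definition nu_bounded (h : T -> K) :=
  exists r : R, forall p, S p -> (nu (h p) <= r%:E)%E.

Lemma eq_nu_bounded h1 h2 : h1 =1 h2 -> nu_bounded h2 -> nu_bounded h1.
Proof. by move=> h12 [r hr]; exists r => p Sp; rewrite h12; apply: hr. Qed.

Lemma nu_bounded_cst c : nu_bounded (fun => c).
Proof. by exists (fine (nu c)) => p _; rewrite le_fine // nu_neq_pinfty. Qed.

Lemma nu_boundedD h1 h2 :
  nu_bounded h1 -> nu_bounded h2 -> nu_bounded (fun p => h1 p + h2 p).
Proof.
move=> [r1 h1r] [r2 h2r]; exists (Order.max r1 r2) => p Sp.
apply: nuD_le => //; [apply: le_trans (h1r p Sp) _ | apply: le_trans (h2r p Sp) _].
  by rewrite lee_fin le_max lexx.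
by rewrite lee_fin le_max lexx orbT.
Qed.

Lemma nu_boundedM h1 h2 :
  nu_bounded h1 -> nu_bounded h2 -> nu_bounded (fun p => h1 p * h2 p).
Proof.
move=> [r1 h1r] [r2 h2r]; exists (r1 + r2) => p Sp.
by rewrite nuM // EFinD leeD ?h1r ?h2r.
Qed.

Lemma nu_bounded_sum (I : Type) (s : seq I) (F : I -> T -> K) :
  (forall i, nu_bounded (F i)) -> nu_bounded (fun p => \sum_(i <- s) F i p).
Proof.
move=> bF; elim: s => [|i s IHs].
  by apply: (eq_nu_bounded _ (nu_bounded_cst 0)) => p; rewrite big_nil.
apply: (eq_nu_bounded _ (nu_boundedD (bF i) IHs)) => p.
by rewrite big_cons.
Qed.

Lemma nu_bounded_prod (I : Type) (s : seq I) (F : I -> T -> K) :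
  (forall i, nu_bounded (F i)) -> nu_bounded (fun p => \prod_(i <- s) F i p).
Proof.
move=> bF; elim: s => [|i s IHs].
  by apply: (eq_nu_bounded _ (nu_bounded_cst 1)) => p; rewrite big_nil.
apply: (eq_nu_bounded _ (nu_boundedM (bF i) IHs)) => p.
by rewrite big_cons.
Qed.

Lemma nu_boundedX h m : nu_bounded h -> nu_bounded (fun p => h p ^+ m).
Proof.
move=> bh; apply: (eq_nu_bounded _ (nu_bounded_prod (index_iota 0 m) (fun=> bh))).
by move=> p; rewrite prodr_const_nat subn0.
Qed.

Lemma nu_bounded_meval n (c : T -> 'I_n -> K) (f : {mpoly K[n]}) :
  (forall k, nu_bounded (c^~ k)) -> nu_bounded (fun p => meval (c p) f).
Proof.
move=> bc; apply: (eq_nu_bounded (fun p => mevalE (c p) f)).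
apply: nu_bounded_sum => m; apply: nu_boundedM; first exact: nu_bounded_cst.
by apply: nu_bounded_prod => i; apply: nu_boundedX.
Qed.

End BoundedValuation.

Section UltrafilterLimits.
Context (T : Type) (U : set_system T) (UU : UltraFilter U).

Lemma ultra_fmap (V : Type) (g : T -> V) : UltraFilter (g @ U).
Proof.
split=> [|G GF gUG]; first exact: fmap_proper_filter.
apply/funext => A; apply/propext; split=> [GA|]; last exact: gUG.
have [//|UnA] := in_ultra_setVsetC (g @^-1` A) UU.
have GnA : G (~` A) by apply: gUG.
by have /filter_ex [? []] : G (A `&` ~` A) by apply: filterI.
Qed.

Lemma ultra_cvg_segment (R : realType) (h : T -> R) (a b : R) :
  U (h @^-1` `[a, b]) -> h @ U --> lim (h @ U).
Proof.
move=> Uab; have := @segment_compact R a b; rewrite compact_ultra /=.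
case/(_ (h @ U) (ultra_fmap h) Uab) => l [_ hl].
by rewrite (cvg_lim (@Rhausdorff R) hl).
Qed.

End UltrafilterLimits.

Section Ultralimit.
Context (R : realType) (K : fieldType) (nu : K -> \bar R).
Hypothesis nuV : is_nA_valuation nu.
Context (n : nat) (X : set ('I_n -> K)) (U : set_system ('I_n -> K)).
Context (UU : UltraFilter U) (UX : U X).

Definition classical_value (f : {mpoly K[n]}) (p : 'I_n -> K) : R :=
  classical_point nu p f.

Hypothesis U_cvg : forall f, cvg (classical_value f @ U).

Definition ultralimit f : R := lim (classical_value f @ U).

Lemma ultralimit_near_cst f c :
  (\forall p \near U, classical_value f p = c) -> ultralimit f = c.
Proof. exact: (lim_near_cst (@Rhausdorff R)). Qed.

Lemma ultralimit_on_X f c :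
  (forall p, X p -> classical_value f p = c) -> ultralimit f = c.
Proof. by move=> fc; apply: ultralimit_near_cst; apply: filterS UX. Qed.

Lemma berkovich_ultralimit : berkovich_point nu X ultralimit.
Proof.
split.
- move=> a; apply: ultralimit_on_X => p _.
  by rewrite /classical_value /classical_point mevalC.
- move=> f; apply: limr_ge; first exact: U_cvg.
  by apply: filterE => p; apply: expT_ge0.
- move=> f g; rewrite /ultralimit -limM ?U_cvg //.
  congr (lim (_ @ U)); apply/funext => p.
  by rewrite /classical_value /classical_point mevalM nuM // expTD // nu_neq_pinfty.
- move=> f g; rewrite -subr_le0.
  apply: (cvgr_to_le (cvgB (@U_cvg (f + g)) (cvgD (@U_cvg f) (@U_cvg g)))).
  apply: filterE => p; rewrite /= subr_le0.
  by rewrite /classical_value /classical_point mevalD expT_nuD.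
- move=> f f0; apply: ultralimit_on_X => p Xp.
  by rewrite /classical_value /classical_point f0 // nu0.
Qed.

End Ultralimit.

Unset Implicit Arguments.

Section Surjectivity.
Context (R : realType) (K : fieldType) (nu : K -> \bar R).
Hypothesis nuV : is_nA_valuation nu.
Context (n : nat) (X : set ('I_n -> K)) (t : trop_family R K n).
Hypothesis t_lim : in_inverse_limit nu X t.

Definition fibre N (A : 'I_N -> 'I_n -> K) b : set ('I_n -> K) :=
  [set p | X p /\ nuvec nu (linmap A b p) = t N A b].

Lemma t_neq_pinfty N A b j : lin_embedding X A b -> t N A b j != +oo%E.
Proof. by move=> /(proj1 t_lim N A b) [p _ <-]; apply: nu_neq_pinfty. Qed.

Lemma fibre_neq0 N A b : lin_embedding X A b -> fibre N A b !=set0.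
Proof. by move=> /(proj1 t_lim N A b) [p Xp tE]; exists p. Qed.

Lemma fibre_coordproj_sub N M (A : 'I_N -> 'I_n -> K) b (A' : 'I_M -> 'I_n -> K) b'
    (f : 'I_M -> 'I_N) :
  lin_embedding X A b -> lin_embedding X A' b' ->
  (forall p l, X p -> linmap A b p (f l) = linmap A' b' p l) ->
  fibre N A b `<=` fibre M A' b'.
Proof.
move=> emb emb' AA'.
have [|y [yt yt']] := proj2 t_lim N M A b A' b' (coordproj f) (fun=> 0) emb emb'
  (torus_hom_coordproj f).
  by move=> p Xp; apply/funext => l; rewrite linmap_coordproj AA'.
move=> p [Xp pt]; split=> //; apply/funext => l.
rewrite -yt' /nuvec linmap_coordproj -AA' //.
by transitivity (t N A b (f l)); [rewrite -pt | rewrite -yt].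
Qed.

Definition lindata := {N : nat & (('I_N -> 'I_n -> K) * ('I_N -> K))%type}.

Definition embedding_data : set lindata :=
  fun e => lin_embedding X (projT2 e).1 (projT2 e).2.

Definition fibre_filter : set_system ('I_n -> K) :=
  filter_from embedding_data (fun e => fibre (projT1 e) (projT2 e).1 (projT2 e).2).

Lemma fibre_filter_proper : ProperFilter fibre_filter.
Proof.
apply: filter_from_proper => [|[N [A b]] /fibre_neq0 //].
apply: filter_from_filter.
  by exists (existT _ n (coordproj id, fun=> 0)); apply: lin_embedding_translation.
move=> [N1 [A1 b1]] [N2 [A2 b2]] /= emb1 emb2.
have emb12 := lin_embedding_catf A2 b2 emb1.
exists (existT _ (N1 + N2)%N (catf A1 A2, catf b1 b2)) => // p Bp; split.
  apply: fibre_coordproj_sub (lshift N2) emb12 emb1 _ _ Bp.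
  by move=> q l _; rewrite linmap_catf_lshift.
apply: fibre_coordproj_sub (@rshift N1 N2) emb12 emb2 _ _ Bp.
by move=> q l _; rewrite linmap_catf_rshift.
Qed.

Lemma inverse_limit_surj : exists x : {mpoly K[n]} -> R, berkovich_point nu X x /\
  forall N A b, lin_embedding X A b -> pi_lin A b x = t N A b.
Proof.
have [U [UU fibre_U]] := ultraFilterLemma fibre_filter_proper.
have U_fibre N (A : 'I_N -> 'I_n -> K) b : lin_embedding X A b -> U (fibre N A b).
  by move=> emb; apply: fibre_U; exists (existT _ N (A, b)).
have U_id := U_fibre n (coordproj id) (fun=> 0) (lin_embedding_translation X _).
have UX : U X by apply: filterS U_id => p [].
have coord_bounded k : nu_bounded nu (fibre n (coordproj id) (fun=> 0)) (fun p => p k).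
  exists (fine (t n (coordproj id) (fun=> 0) k)) => p [_ pt].
  move: (congr1 (fun v => v k) pt); rewrite /nuvec linmap_coordproj => ->.
  by rewrite le_fine // t_neq_pinfty //; apply: lin_embedding_translation.
have U_cvg f : cvg (classical_value nu f @ U).
  have [r fr] := nu_bounded_meval nuV f coord_bounded.
  apply/cvg_ex; exists (lim (classical_value nu f @ U)).
  apply: (ultra_cvg_segment UU (a := 0) (b := expR r)); apply: filterS U_id => p /fr pr.
  by rewrite /= in_itv /= expT_ge0 (le_expT _ pr).
exists (ultralimit nu U); split; first exact: berkovich_ultralimit.
move=> N A b emb; apply/funext => j; rewrite /pi_lin.
have -> : ultralimit nu U (linpoly A b j) = expT (t N A b j).
  apply: ultralimit_near_cst; apply: filterS (U_fibre N A b emb) => p [_ pt].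
  by rewrite /classical_value /classical_point meval_linpoly -pt.
by rewrite expTK // t_neq_pinfty.
Qed.

End Surjectivity.

Theorem theorem3p1 (R : realType) (K : closedFieldType) (nu : K -> \bar R)
  (n : nat) (X : set ('I_n -> K)) :
  is_nA_valuation nu -> nontrivial_valuation nu -> complete_valuation nu ->
  closed_algebraic X ->
  (* (i) pi is surjective onto the inverse limit *)
  (forall t : trop_family R K n, in_inverse_limit nu X t ->
     exists x : mpoly.mpoly n K -> R, berkovich_point nu X x /\
       forall N A b, lin_embedding X A b -> pi_lin A b x = t N A b) /\
  (* (ii) pi restricted to X^cl is injective *)
  (forall p q : 'I_n -> K, X p -> X q ->
     (forall N (A : 'I_N -> 'I_n -> K) b, lin_embedding X A b ->
        pi_lin A b (classical_point nu p) = pi_lin A b (classical_point nu q)) ->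
     classical_point nu p = classical_point nu q).
Proof.
move=> nuV _ _ _; split=> [t t_lim | p q _ _ pi_pq].
  exact: inverse_limit_surj.
by rewrite (pi_lin_classical_inj nuV pi_pq).
Qed.
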